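(* Let $H,\mathsf H$ be semigroups, $\mathfrak h\colon H\to\mathsf H$ a homomorphism, $X$ an $H$-set, $S$ an order-complete ordered $\mathsf H$-set with completion $\overline S$, and $f\colon X\to\overline S$. Then: [l] $\mathrm{lE}^f_{\mathcal H_{\le}}=f$ if and only if $f\in\mathcal H_{\le}$; [u] $\mathrm{uE}_f^{\mathcal H_{\ge}}=f$ if and only if $f\in\mathcal H_{\ge}$. If in addition $\mathsf H$ is a group, the following three conditions are equivalent: (1) $f\in\overline{\mathcal H}$; (2) $\mathrm{lE}^f_{\overline{\mathcal H}}=f$; (3) $\mathrm{uE}_f^{\overline{\mathcal H}}=f$.
   Context: $X$ is an $H$-set: an action $(h,x)\mapsto hx$ with $h_1(h_2x)=(h_1h_2)x$ (and $1x=x$ if $H$ has identity $1$); similarly $S$ is an $\mathsf H$-set, with a partial order $\leqslant$ such that $s_1\leqslant s_2\Rightarrow\mathsf h s_1\leqslant\mathsf h s_2$. $S$ is order-complete: every nonempty subset bounded below (above) in $S$ has an infimum (supremum) in $S$. The completion $\overline S$ adjoins a new least element $\inf S$ if $S$ has none and a new greatest element $\sup S$ if $S$ has none; the action is extended by $\mathsf h\cdot\inf S=\inf S$, $\mathsf h\cdot\sup S=\sup S$ for the adjoined symbols; in $\overline S$, $\sup\varnothing$ is the least and $\inf\varnothing$ the greatest element. Functions $X\to\overline S$ are ordered pointwise. Classes: $\overline{\mathcal H}$ = functions $\varphi\colon X\to\overline S$ with $\varphi(hx)=\mathfrak h(h)\varphi(x)$ for all $h\in H,x\in X$; $\mathcal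 H_{\le}$ = functions $\varphi\colon X\to\overline S$ with $\varphi(hx)\leqslant\mathfrak h(h)\varphi(x)$ for all $h,x$; $\mathcal H_{\ge}$ = functions $\varphi\colon X\to\overline S$ with $\mathfrak h(h)\varphi(x)\leqslant\varphi(hx)$ for all $h,x$. For a class $\Phi$: $\mathrm{lE}^f_\Phi(x)=\sup\{\varphi(x):\varphi\in\Phi,\ \varphi\leqslant f\text{ on }X\}$ and $\mathrm{uE}_f^\Phi(x)=\inf\{\varphi(x):\varphi\in\Phi,\ f\leqslant\varphi\text{ on }X\}$, in $\overline S$. *)

Definition associative {G : Type} (mul : G -> G -> G) : Prop :=
  forall a b c, mul a (mul b c) = mul (mul a b) c.

Definition is_identity {G : Type} (mul : G -> G -> G) (e : G) : Prop :=
  forall g, mul e g = g /\ mul g e = g.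

Definition is_group {G : Type} (mul : G -> G -> G) : Prop :=
  exists e, is_identity mul e /\ forall g, exists g', mul g' g = e /\ mul g g' = e.

Definition is_action {G T : Type} (mul : G -> G -> G) (act : G -> T -> T) : Prop :=
  (forall g1 g2 t, act g1 (act g2 t) = act (mul g1 g2) t) /\
  (forall e, is_identity mul e -> forall t, act e t = t).

Definition is_partial_order {S : Type} (le : S -> S -> Prop) : Prop :=
  (forall s, le s s) /\
  (forall s t, le s t -> le t s -> s = t) /\
  (forall s t u, le s t -> le t u -> le s u).

Definition IsSup {T : Type} (R : T -> T -> Prop) (A : T -> Prop) (z : T) : Prop :=
  (forall a, A a -> R a z) /\ (forall u, (forall a, A a -> R a u) -> R z u).

Definition IsInf {T : Type} (R : T -> T -> Prop) (A : T -> Prop) (z : T) : Prop :=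
  (forall a, A a -> R z a) /\ (forall u, (forall a, A a -> R u a) -> R u z).

Definition order_complete {S : Type} (le : S -> S -> Prop) : Prop :=
  (forall A : S -> Prop, (exists a, A a) -> (exists b, forall a, A a -> le b a) ->
     exists i, IsInf le A i) /\
  (forall A : S -> Prop, (exists a, A a) -> (exists b, forall a, A a -> le a b) ->
     exists s, IsSup le A s).

Inductive ext (S : Type) : Type := EBot | EFin (s : S) | ETop.
Arguments EBot {S}. Arguments ETop {S}. Arguments EFin {S} s.

(* EBot = adjoined inf S (only if S has no least element),
   ETop = adjoined sup S (only if S has no greatest element). *)
Definition ext_ok {S : Type} (le : S -> S -> Prop) (z : ext S) : Prop :=
  match z with
  | EBot => ~ (exists m, forall s, le m s)
  | EFin _ => True
  | ETop => ~ (exists M, forall s, le s M)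
  end.

Definition Sbar {S : Type} (le : S -> S -> Prop) : Type := { z : ext S | ext_ok le z }.

Definition ext_le {S : Type} (le : S -> S -> Prop) (a b : ext S) : Prop :=
  match a, b with
  | EBot, _ => True
  | _, ETop => True
  | EFin s, EFin t => le s t
  | _, _ => False
  end.

Definition Sbar_le {S : Type} (le : S -> S -> Prop) (a b : Sbar le) : Prop :=
  ext_le le (proj1_sig a) (proj1_sig b).

Definition ext_act {G S : Type} (act : G -> S -> S) (g : G) (z : ext S) : ext S :=
  match z with
  | EFin s => EFin (act g s)
  | EBot => EBot
  | ETop => ETop
  end.

Lemma ext_act_ok {G S : Type} (le : S -> S -> Prop) (act : G -> S -> S) g z :
  ext_ok le z -> ext_ok le (ext_act act g z).
Proof. destruct z; simpl; auto. Qed.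

Definition Sbar_act {G S : Type} (le : S -> S -> Prop) (act : G -> S -> S)
  (g : G) (a : Sbar le) : Sbar le :=
  exist _ (ext_act act g (proj1_sig a)) (@ext_act_ok G S le act g (proj1_sig a) (proj2_sig a)).

Section Classes.
Context {H HH X S : Type} (hom : H -> HH) (actX : H -> X -> X)
        (actS : HH -> S -> S) (le : S -> S -> Prop).

Definition in_Hbar (phi : X -> Sbar le) : Prop :=
  forall h x, phi (actX h x) = Sbar_act le actS (hom h) (phi x).

Definition in_Hle (phi : X -> Sbar le) : Prop :=
  forall h x, Sbar_le le (phi (actX h x)) (Sbar_act le actS (hom h) (phi x)).

Definition in_Hge (phi : X -> Sbar le) : Prop :=
  forall h x, Sbar_le le (Sbar_act le actS (hom h) (phi x)) (phi (actX h x)).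
End Classes.

Definition is_lE {X S : Type} (le : S -> S -> Prop) (Phi : (X -> Sbar le) -> Prop)
  (f g : X -> Sbar le) : Prop :=
  forall x, IsSup (Sbar_le le)
    (fun v => exists phi, Phi phi /\ (forall y, Sbar_le le (phi y) (f y)) /\ v = phi x)
    (g x).

Definition is_uE {X S : Type} (le : S -> S -> Prop) (Phi : (X -> Sbar le) -> Prop)
  (f g : X -> Sbar le) : Prop :=
  forall x, IsInf (Sbar_le le)
    (fun v => exists phi, Phi phi /\ (forall y, Sbar_le le (f y) (phi y)) /\ v = phi x)
    (g x).

(** If [f] itself belongs to the class, it is the largest minorant (smallest
    majorant) of itself in the class, so it is its own envelope.  Conversely,
    the defining inequality of [H_le] passes to pointwise suprema: each
    minorant [phi] satisfies [phi (h x) <= h.phi x <= h.f x], so the least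
    upper bound [f (h x)] does too, and dually for [H_ge] and infima.  When
    the acting semigroup is a group, [s |-> h.s] is an order automorphism of
    the completion, so [h.a <= b] iff [a <= h^-1.b]; this turns the equivariance
    of the minorants (majorants) into the missing inequality of [f]. *)
From Stdlib Require Import ProofIrrelevance.

Section SbarOrder.
Context {S : Type} (le : S -> S -> Prop) (le_po : is_partial_order le).

Lemma Sbar_eq (a b : Sbar le) : proj1_sig a = proj1_sig b -> a = b.
Proof.
  destruct a as [a pa], b as [b pb]; simpl; intros ->.
  f_equal; apply proof_irrelevance.
Qed.

Lemma Sbar_le_refl a : Sbar_le le a a.
Proof.
  destruct a as [[| s |] p]; unfold Sbar_le; simpl; auto.
  apply (proj1 le_po).
Qed.

Lemma Sbar_le_trans a b c : Sbar_le le a b -> Sbar_le le b c -> Sbar_le le a c.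
Proof.
  destruct a as [[| s |] p], b as [[| t |] q], c as [[| u |] r];
    unfold Sbar_le; simpl; auto; try contradiction.
  apply (proj2 (proj2 le_po)).
Qed.

Lemma Sbar_le_antisym a b : Sbar_le le a b -> Sbar_le le b a -> a = b.
Proof.
  intros Hab Hba; apply Sbar_eq.
  destruct a as [[| s |] p], b as [[| t |] q];
    unfold Sbar_le in *; simpl in *; auto; try contradiction.
  f_equal; apply (proj1 (proj2 le_po)); auto.
Qed.

End SbarOrder.

Section SbarAction.
Context {G S : Type} (le : S -> S -> Prop) (actS : G -> S -> S).

Lemma Sbar_act_mono
  (actS_mono : forall g s1 s2, le s1 s2 -> le (actS g s1) (actS g s2)) g a b :
  Sbar_le le a b -> Sbar_le le (Sbar_act le actS g a) (Sbar_act le actS g b).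
Proof.
  destruct a as [[| s |] p], b as [[| t |] q]; unfold Sbar_le; simpl; auto.
Qed.

Lemma Sbar_act_cancel (mul : G -> G -> G) (actS_ok : is_action mul actS) g' g e a :
  is_identity mul e -> mul g' g = e ->
  Sbar_act le actS g' (Sbar_act le actS g a) = a.
Proof.
  intros He Hg; apply Sbar_eq.
  destruct a as [[| s |] p]; simpl; auto.
  rewrite (proj1 actS_ok), Hg, (proj2 actS_ok); auto.
Qed.

Lemma Sbar_act_invertible (mul : G -> G -> G) (actS_ok : is_action mul actS) :
  is_group mul -> forall g, exists g',
    (forall a, Sbar_act le actS g' (Sbar_act le actS g a) = a) /\
    (forall a, Sbar_act le actS g (Sbar_act le actS g' a) = a).
Proof.
  intros [e [He Hinv]] g.
  destruct (Hinv g) as [g' [Hg'g Hgg']].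
  exists g'; split; intro a; eapply Sbar_act_cancel; eauto.
Qed.

Lemma Sbar_act_adjoint (le_po : is_partial_order le)
  (actS_mono : forall g s1 s2, le s1 s2 -> le (actS g s1) (actS g s2)) g g' :
  (forall a, Sbar_act le actS g' (Sbar_act le actS g a) = a) ->
  (forall a, Sbar_act le actS g (Sbar_act le actS g' a) = a) ->
  forall a b, Sbar_le le (Sbar_act le actS g a) b <-> Sbar_le le a (Sbar_act le actS g' b).
Proof.
  intros Hg'g Hgg' a b; split; intro Hab.
  - rewrite <- (Hg'g a); apply Sbar_act_mono; auto.
  - rewrite <- (Hgg' b); apply Sbar_act_mono; auto.
Qed.

End SbarAction.

Section Envelopes.
Context {X S : Type} (le : S -> S -> Prop) (le_po : is_partial_order le)
  (Phi : (X -> Sbar le) -> Prop) (f : X -> Sbar le).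

Lemma is_lE_self : Phi f -> is_lE le Phi f f.
Proof.
  intros Hf x; split.
  - intros a [phi [_ [Hphi ->]]]; apply Hphi.
  - intros u Hu; apply Hu; exists f; repeat split; auto.
    intro y; apply Sbar_le_refl; auto.
Qed.

Lemma is_uE_self : Phi f -> is_uE le Phi f f.
Proof.
  intros Hf x; split.
  - intros a [phi [_ [Hphi ->]]]; apply Hphi.
  - intros u Hu; apply Hu; exists f; repeat split; auto.
    intro y; apply Sbar_le_refl; auto.
Qed.

Lemma is_lE_self_least x u : is_lE le Phi f f ->
  (forall phi, Phi phi -> (forall y, Sbar_le le (phi y) (f y)) -> Sbar_le le (phi x) u) ->
  Sbar_le le (f x) u.
Proof.
  intros HE Hu; apply (proj2 (HE x)).
  intros a [phi [Hp [Hphi ->]]]; auto.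
Qed.

Lemma is_uE_self_greatest x u : is_uE le Phi f f ->
  (forall phi, Phi phi -> (forall y, Sbar_le le (f y) (phi y)) -> Sbar_le le u (phi x)) ->
  Sbar_le le u (f x).
Proof.
  intros HE Hu; apply (proj2 (HE x)).
  intros a [phi [Hp [Hphi ->]]]; auto.
Qed.

End Envelopes.

Section Classes.
Context {H HH X S : Type} (hom : H -> HH) (actX : H -> X -> X)
  (actS : HH -> S -> S) (le : S -> S -> Prop) (le_po : is_partial_order le)
  (actS_mono : forall g s1 s2, le s1 s2 -> le (actS g s1) (actS g s2)).

Lemma in_Hbar_Hle phi : in_Hbar hom actX actS le phi -> in_Hle hom actX actS le phi.
Proof. intros Hphi h x; rewrite Hphi; apply Sbar_le_refl; auto. Qed.

Lemma in_Hbar_Hge phi : in_Hbar hom actX actS le phi -> in_Hge hom actX actS le phi.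
Proof. intros Hphi h x; rewrite Hphi; apply Sbar_le_refl; auto. Qed.

Lemma in_Hbar_of_Hle_Hge phi :
  in_Hle hom actX actS le phi -> in_Hge hom actX actS le phi ->
  in_Hbar hom actX actS le phi.
Proof. intros Hle Hge h x; apply Sbar_le_antisym; auto. Qed.

Lemma in_Hle_of_is_lE_self (Phi : (X -> Sbar le) -> Prop) f :
  (forall phi, Phi phi -> in_Hle hom actX actS le phi) ->
  is_lE le Phi f f -> in_Hle hom actX actS le f.
Proof.
  intros HPhi HE h x; apply (is_lE_self_least le Phi f); auto.
  intros phi Hp Hphi.
  eapply Sbar_le_trans; [auto | apply HPhi; auto | apply Sbar_act_mono; auto].
Qed.

Lemma in_Hge_of_is_uE_self (Phi : (X -> Sbar le) -> Prop) f :
  (forall phi, Phi phi -> in_Hge hom actX actS le phi) ->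
  is_uE le Phi f f -> in_Hge hom actX actS le f.
Proof.
  intros HPhi HE h x; apply (is_uE_self_greatest le Phi f); auto.
  intros phi Hp Hphi.
  eapply Sbar_le_trans; [auto | apply Sbar_act_mono; eauto | apply HPhi; auto].
Qed.

Section GroupAction.
Hypothesis actS_invertible : forall g, exists g',
  (forall a, Sbar_act le actS g' (Sbar_act le actS g a) = a) /\
  (forall a, Sbar_act le actS g (Sbar_act le actS g' a) = a).

Lemma in_Hge_of_is_lE_Hbar_self f :
  is_lE le (in_Hbar hom actX actS le) f f -> in_Hge hom actX actS le f.
Proof.
  intros HE h x.
  destruct (actS_invertible (hom h)) as [g' [Hg'g Hgg']].
  apply (Sbar_act_adjoint le actS le_po actS_mono _ _ Hg'g Hgg').
  apply (is_lE_self_least le (in_Hbar hom actX actS le) f); auto.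
  intros phi Hp Hphi.
  apply (Sbar_act_adjoint le actS le_po actS_mono _ _ Hg'g Hgg').
  rewrite <- Hp; apply Hphi.
Qed.

Lemma in_Hle_of_is_uE_Hbar_self f :
  is_uE le (in_Hbar hom actX actS le) f f -> in_Hle hom actX actS le f.
Proof.
  intros HE h x.
  destruct (actS_invertible (hom h)) as [g' [Hg'g Hgg']].
  apply (Sbar_act_adjoint le actS le_po actS_mono _ _ Hgg' Hg'g).
  apply (is_uE_self_greatest le (in_Hbar hom actX actS le) f); auto.
  intros phi Hp Hphi.
  apply (Sbar_act_adjoint le actS le_po actS_mono _ _ Hgg' Hg'g).
  rewrite <- Hp; apply Hphi.
Qed.

Lemma in_Hbar_of_is_lE_Hbar_self f :
  is_lE le (in_Hbar hom actX actS le) f f -> in_Hbar hom actX actS le f.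
Proof.
  intro HE; apply in_Hbar_of_Hle_Hge; auto using in_Hge_of_is_lE_Hbar_self.
  apply (in_Hle_of_is_lE_self (in_Hbar hom actX actS le)); auto using in_Hbar_Hle.
Qed.

Lemma in_Hbar_of_is_uE_Hbar_self f :
  is_uE le (in_Hbar hom actX actS le) f f -> in_Hbar hom actX actS le f.
Proof.
  intro HE; apply in_Hbar_of_Hle_Hge; auto using in_Hle_of_is_uE_Hbar_self.
  apply (in_Hge_of_is_uE_self (in_Hbar hom actX actS le)); auto using in_Hbar_Hge.
Qed.

End GroupAction.
End Classes.

Theorem theorem1
  (H HH X S : Type) (mulH : H -> H -> H) (mulHH : HH -> HH -> HH)
  (hom : H -> HH) (actX : H -> X -> X) (actS : HH -> S -> S)
  (le : S -> S -> Prop)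
  (assocH : associative mulH) (assocHH : associative mulHH)
  (hom_mul : forall a b, hom (mulH a b) = mulHH (hom a) (hom b))
  (actX_ok : is_action mulH actX) (actS_ok : is_action mulHH actS)
  (le_po : is_partial_order le)
  (actS_mono : forall g s1 s2, le s1 s2 -> le (actS g s1) (actS g s2))
  (le_complete : order_complete le)
  (f : X -> Sbar le) :
  (is_lE le (in_Hle hom actX actS le) f f <-> in_Hle hom actX actS le f) /\
  (is_uE le (in_Hge hom actX actS le) f f <-> in_Hge hom actX actS le f) /\
  (is_group mulHH ->
     (in_Hbar hom actX actS le f <-> is_lE le (in_Hbar hom actX actS le) f f) /\
     (in_Hbar hom actX actS le f <-> is_uE le (in_Hbar hom actX actS le) f f)).
Proof.
  split; [|split]; [split | split | intro Hgroup].
  - apply in_Hle_of_is_lE_self; auto.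
  - apply is_lE_self; auto.
  - apply in_Hge_of_is_uE_self; auto.
  - apply is_uE_self; auto.
  - assert (Hinv := Sbar_act_invertible le actS mulHH actS_ok Hgroup).
    split; split; intro Hf.
    + apply is_lE_self; auto.
    + apply in_Hbar_of_is_lE_Hbar_self; auto.
    + apply is_uE_self; auto.
    + apply in_Hbar_of_is_uE_Hbar_self; auto.
Qed.
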